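(* There is an absolute constant $c_1>0$ such that for each $b\in(0,\pi]$, each $n\in\mathbb{N}$, any linear function $l(x)=ax+k$ ($a,k\in\mathbb{R}$) and every trigonometric polynomial $T_n\in\mathcal{T}_n$, $$\|F_1+l-T_n\|_{[-b,b]}\ge\frac{c_1 b}{n},$$ where $F_1(x)=|x|$.
   Context: $\mathcal{T}_n$ is the space of real trigonometric polynomials of degree $\le n$. For a function $g$ on $[a,b]$, $\|g\|_{[a,b]}:=\max_{x\in[a,b]}|g(x)|$. *)

From Stdlib Require Import Reals.
Open Scope R_scope.

Fixpoint trig_sum (a b : nat -> R) (n : nat) (x : R) : R :=
  match n with
  | O => a O
  | S m => trig_sum a b m x + a (S m) * cos (INR (S m) * x)
                           + b (S m) * sin (INR (S m) * x)
  end.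

Definition is_trig_poly (n : nat) (T : R -> R) : Prop :=
  exists a b : nat -> R, forall x, T x = trig_sum a b n x.

Definition F1 (x : R) : R := Rabs x.

From Stdlib Require Import Reals Lra Lia Psatz Arith Classical.
From Coquelicot Require Import Coquelicot.
Open Scope R_scope.

(* Suppose |x| + l(x) - T(x) is at most eps on [-b, b].  Averaging over x and -x
   removes the slope of l and the sine part of T, so a cosine polynomial of
   degree n is eps-close to |y| + k on [-b, b].  The substitution
   y = 2 asin (s sin (x/2)), s = sin (b/4), maps the whole line into
   [-b/2, b/2] and satisfies cos y = 1 - s^2 + s^2 cos x, so it turns that
   cosine polynomial into a cosine polynomial R of degree n in x which is
   eps-close on all of R to D(x) = |y(x)| + k: a 2s-Lipschitz function with a
   kink of slope about s at 0.  Bernstein's inequality |R''| <= 10 n sup |R'|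
   and Taylor's formula first give sup |R'| = O(s + n eps) from the Lipschitz
   bound; then, since R'(0) = 0, R cannot follow the kink unless s = O(n eps).
   As s >= b/8, this gives eps >= c b / n. *)

Fixpoint rsum (m : nat) (f : nat -> R) : R :=
  match m with O => 0 | S p => rsum p f + f p end.

Lemma rsum_ext m f g : (forall i, (i < m)%nat -> f i = g i) -> rsum m f = rsum m g.
Proof.
  induction m as [|m IH]; intros H; simpl; [reflexivity|].
  rewrite IH, H; [reflexivity | lia | intros; apply H; lia].
Qed.

Lemma rsum_add m f g : rsum m (fun i => f i + g i) = rsum m f + rsum m g.
Proof. induction m as [|m IH]; simpl; [ring | rewrite IH; ring]. Qed.

Lemma rsum_sub m f g : rsum m (fun i => f i - g i) = rsum m f - rsum m g.
Proof. induction m as [|m IH]; simpl; [ring | rewrite IH; ring]. Qed.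

Lemma rsum_scal_l m c f : rsum m (fun i => c * f i) = c * rsum m f.
Proof. induction m as [|m IH]; simpl; [ring | rewrite IH; ring]. Qed.

Lemma rsum_scal_r m c f : rsum m (fun i => f i * c) = rsum m f * c.
Proof. induction m as [|m IH]; simpl; [ring | rewrite IH; ring]. Qed.

Lemma rsum_const m c : rsum m (fun _ => c) = INR m * c.
Proof. induction m as [|m IH]; simpl rsum; [simpl; ring | rewrite IH, S_INR; ring]. Qed.

Lemma rsum_zero m : rsum m (fun _ => 0) = 0.
Proof. rewrite rsum_const; ring. Qed.

Lemma rsum_swap m p f :
  rsum m (fun i => rsum p (f i)) = rsum p (fun j => rsum m (fun i => f i j)).
Proof.
  induction m as [|m IH]; simpl.
  - symmetry; apply rsum_zero.
  - rewrite IH, <- rsum_add; reflexivity.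
Qed.

Lemma rsum_mul m p f g :
  rsum m f * rsum p g = rsum m (fun i => rsum p (fun j => f i * g j)).
Proof.
  rewrite <- rsum_scal_r; apply rsum_ext; intros.
  rewrite <- rsum_scal_l; reflexivity.
Qed.

Lemma rsum_abs m f : Rabs (rsum m f) <= rsum m (fun i => Rabs (f i)).
Proof.
  induction m as [|m IH]; simpl.
  - rewrite Rabs_R0; lra.
  - eapply Rle_trans; [apply Rabs_triang | lra].
Qed.

Lemma rsum_le m f g : (forall i, (i < m)%nat -> f i <= g i) -> rsum m f <= rsum m g.
Proof.
  induction m as [|m IH]; intros H; simpl; [lra|].
  apply Rplus_le_compat; [apply IH; intros; apply H|apply H]; lia.
Qed.

Lemma rsum_delta m p g :
  rsum m (fun i => if Nat.eq_dec i p then g i else 0) = if lt_dec p m then g p else 0.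
Proof.
  induction m as [|m IH]; simpl.
  - destruct (lt_dec p 0); [lia | reflexivity].
  - rewrite IH.
    destruct (Nat.eq_dec m p), (lt_dec p m), (lt_dec p (S m)); subst; try lia; ring.
Qed.

Lemma rsum_indicator_lt m p :
  rsum m (fun i => if lt_dec i p then 1 else 0) = INR (Nat.min m p).
Proof.
  induction m as [|m IH]; simpl rsum; [reflexivity|].
  rewrite IH; destruct (lt_dec m p).
  - rewrite !Nat.min_l, S_INR by lia; ring.
  - rewrite !Nat.min_r by lia; ring.
Qed.

(** * Discrete orthogonality at equispaced nodes *)

Lemma sin_half_mul_rsum_cos m a :
  2 * sin (a / 2) * rsum m (fun i => cos (INR i * a)) = sin ((INR m - /2) * a) + sin (a / 2).
Proof.
  induction m as [|m IH]; simpl rsum.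
  - simpl; replace ((0 - /2) * a) with (- (a / 2)) by field; rewrite sin_neg; ring.
  - rewrite Rmult_plus_distr_l, IH, S_INR.
    replace ((INR m + 1 - /2) * a) with (INR m * a + a / 2) by field.
    replace ((INR m - /2) * a) with (INR m * a - a / 2) by field.
    rewrite sin_plus, sin_minus; ring.
Qed.

Lemma sin_half_mul_rsum_sin m a :
  2 * sin (a / 2) * rsum m (fun i => sin (INR i * a)) = cos (a / 2) - cos ((INR m - /2) * a).
Proof.
  induction m as [|m IH]; simpl rsum.
  - simpl; replace ((0 - /2) * a) with (- (a / 2)) by field; rewrite cos_neg; ring.
  - rewrite Rmult_plus_distr_l, IH, S_INR.
    replace ((INR m + 1 - /2) * a) with (INR m * a + a / 2) by field.
    replace ((INR m - /2) * a) with (INR m * a - a / 2) by field.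
    rewrite cos_plus, cos_minus; ring.
Qed.

Definition node (M i : nat) : R := 2 * PI * INR i / INR M.

Lemma node_sum_cos_sin M p : (0 < p < M)%nat ->
  rsum M (fun i => cos (INR p * node M i)) = 0 /\
  rsum M (fun i => sin (INR p * node M i)) = 0.
Proof.
  intros Hp; set (a := 2 * PI * INR p / INR M).
  assert (HPI := PI_RGT_0).
  assert (HM : 0 < INR M) by (apply lt_0_INR; lia).
  assert (Hp0 : 0 < INR p) by (apply lt_0_INR; lia).
  assert (HpM : INR p < INR M) by (apply lt_INR; lia).
  assert (Hsin : 0 < sin (a / 2)).
  { apply sin_gt_0; unfold a.
    - apply Rdiv_lt_0_compat; [apply Rdiv_lt_0_compat|]; nra.
    - apply (Rmult_lt_reg_r (2 * INR M)); [lra|]; field_simplify; nra. }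
  assert (Hnode : forall i, INR p * node M i = INR i * a) by (intros; unfold node, a; field; lra).
  assert (Hend : (INR M - /2) * a = - (a / 2) + 2 * INR p * PI) by (unfold a; field; lra).
  split; apply (Rmult_eq_reg_l (2 * sin (a / 2))); try lra;
    rewrite Rmult_0_r, (rsum_ext _ _ _ (fun i _ => f_equal _ (Hnode i))).
  - rewrite sin_half_mul_rsum_cos, Hend, sin_period, sin_neg; ring.
  - rewrite sin_half_mul_rsum_sin, Hend, cos_period, cos_neg; ring.
Qed.

Lemma node_sum_diff M p q : (p < M + q)%nat -> (q < M + p)%nat ->
  rsum M (fun i => cos ((INR p - INR q) * node M i)) = (if Nat.eq_dec p q then INR M else 0) /\
  rsum M (fun i => sin ((INR p - INR q) * node M i)) = 0.
Proof.
  intros Hpq Hqp; destruct (Nat.eq_dec p q) as [<-|Hne].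
  - rewrite (rsum_ext _ _ (fun _ => 1)), (rsum_ext _ (fun i => sin _) (fun _ => 0)),
      rsum_const, rsum_zero; [split; ring | |];
      intros; replace (INR p - INR p) with 0 by ring;
      rewrite Rmult_0_l; [apply sin_0 | apply cos_0].
  - destruct (lt_dec p q) as [Hlt|Hge].
    + destruct (node_sum_cos_sin M (q - p)) as [Hc Hs]; [lia|].
      assert (Hneg : forall i, (INR p - INR q) * node M i = - (INR (q - p) * node M i))
        by (intros; rewrite minus_INR by lia; ring).
      rewrite (rsum_ext _ _ _ (fun i _ => f_equal cos (Hneg i))),
        (rsum_ext _ _ _ (fun i _ => f_equal sin (Hneg i))).
      rewrite (rsum_ext _ _ _ (fun i _ => cos_neg _)), Hc.
      rewrite (rsum_ext _ _ (fun i => -1 * sin (INR (q - p) * node M i))).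
      * rewrite rsum_scal_l, Hs; split; ring.
      * intros; rewrite sin_neg; ring.
    + rewrite <- minus_INR by lia; apply node_sum_cos_sin; lia.
Qed.

(** * Bernstein's inequality *)

Definition kernel (m : nat) (x : R) : R :=
  rsum m (fun l => rsum m (fun l' => INR l' * sin ((INR l' - INR l) * x))).

Lemma node_sum_kernel_mul M m (phi : R -> R) :
  rsum M (fun i => kernel m (node M i) * phi (node M i)) =
  rsum m (fun l => rsum m (fun l' =>
    INR l' * rsum M (fun i => sin ((INR l' - INR l) * node M i) * phi (node M i)))).
Proof.
  unfold kernel.
  rewrite (rsum_ext _ _ (fun i => rsum m (fun l => rsum m (fun l' =>
    INR l' * (sin ((INR l' - INR l) * node M i) * phi (node M i)))))).
  - rewrite rsum_swap; apply rsum_ext; intros l _.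
    rewrite rsum_swap; apply rsum_ext; intros l' _.
    apply rsum_scal_l.
  - intros i _; rewrite <- rsum_scal_r; apply rsum_ext; intros l _.
    rewrite <- rsum_scal_r; apply rsum_ext; intros; ring.
Qed.

Lemma node_sum_sin_mul_sin M m l l' j : (l < m)%nat -> (l' < m)%nat -> (m + j <= M)%nat ->
  rsum M (fun i => sin ((INR l' - INR l) * node M i) * sin (INR j * node M i)) =
  INR M / 2 * ((if Nat.eq_dec l' (l + j) then 1 else 0) - (if Nat.eq_dec l (l' + j) then 1 else 0)).
Proof.
  intros Hl Hl' HM.
  rewrite (rsum_ext _ _ (fun i => /2 * (cos ((INR l' - INR (l + j)) * node M i)
                                       - cos ((INR (l' + j) - INR l) * node M i)))).
  - rewrite rsum_scal_l, rsum_sub.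
    destruct (node_sum_diff M l' (l + j)) as [-> _]; try lia.
    destruct (node_sum_diff M (l' + j) l) as [-> _]; try lia.
    destruct (Nat.eq_dec l' (l + j)), (Nat.eq_dec (l' + j) l), (Nat.eq_dec l (l' + j));
      try lia; field.
  - intros i _; rewrite !plus_INR.
    replace ((INR l' - (INR l + INR j)) * node M i)
      with ((INR l' - INR l) * node M i - INR j * node M i) by ring.
    replace ((INR l' + INR j - INR l) * node M i)
      with ((INR l' - INR l) * node M i + INR j * node M i) by ring.
    rewrite cos_minus, cos_plus; field.
Qed.

Lemma node_sum_sin_mul_cos M m l l' j : (l < m)%nat -> (l' < m)%nat -> (m + j <= M)%nat ->
  rsum M (fun i => sin ((INR l' - INR l) * node M i) * cos (INR j * node M i)) = 0.
Proof.
  intros Hl Hl' HM.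
  rewrite (rsum_ext _ _ (fun i => /2 * (sin ((INR l' - INR (l + j)) * node M i)
                                       + sin ((INR (l' + j) - INR l) * node M i)))).
  - rewrite rsum_scal_l, rsum_add.
    destruct (node_sum_diff M l' (l + j)) as [_ ->]; try lia.
    destruct (node_sum_diff M (l' + j) l) as [_ ->]; try lia.
    ring.
  - intros i _; rewrite !plus_INR.
    replace ((INR l' - (INR l + INR j)) * node M i)
      with ((INR l' - INR l) * node M i - INR j * node M i) by ring.
    replace ((INR l' + INR j - INR l) * node M i)
      with ((INR l' - INR l) * node M i + INR j * node M i) by ring.
    rewrite sin_minus, sin_plus; field.
Qed.

Lemma node_sum_kernel_cos M m j : (m + j <= M)%nat ->
  rsum M (fun i => kernel m (node M i) * cos (INR j * node M i)) = 0.
Proof.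
  intros HM; rewrite (node_sum_kernel_mul M m (fun x => cos (INR j * x))), <- (rsum_zero m).
  apply rsum_ext; intros l Hl; rewrite <- (rsum_zero m); apply rsum_ext; intros l' Hl'.
  rewrite (node_sum_sin_mul_cos M m) by lia; ring.
Qed.

Lemma node_sum_kernel_sin M m j : (j <= m)%nat -> (m + j <= M)%nat ->
  rsum M (fun i => kernel m (node M i) * sin (INR j * node M i)) = INR M / 2 * (INR j * INR (m - j)).
Proof.
  intros Hjm HM; rewrite (node_sum_kernel_mul M m (fun x => sin (INR j * x))).
  rewrite (rsum_ext _ _ (fun l => INR M / 2 *
    (rsum m (fun l' => if Nat.eq_dec l' (l + j) then INR l' else 0)
     - rsum m (fun l' => if Nat.eq_dec l (l' + j) then INR l' else 0)))).
  2:{ intros l Hl; rewrite <- rsum_sub, <- rsum_scal_l; apply rsum_ext; intros l' Hl'.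
      rewrite (node_sum_sin_mul_sin M m) by lia.
      destruct (Nat.eq_dec l' (l + j)), (Nat.eq_dec l (l' + j)); ring. }
  rewrite rsum_scal_l, rsum_sub, (rsum_swap m m (fun l l' => if Nat.eq_dec l (l' + j) then _ else _)).
  rewrite (rsum_ext _ _ (fun l => if lt_dec (l + j) m then INR (l + j) else 0))
    by (intros l _; apply (rsum_delta m (l + j) INR)).
  rewrite (rsum_ext _ (fun l' => rsum m _) (fun l' => if lt_dec (l' + j) m then INR l' else 0))
    by (intros l' _; apply (rsum_delta m (l' + j) (fun _ => INR l'))).
  rewrite <- rsum_sub, (rsum_ext _ _ (fun l => INR j * (if lt_dec l (m - j) then 1 else 0))).
  - rewrite rsum_scal_l, rsum_indicator_lt, Nat.min_r by lia; reflexivity.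
  - intros l _; destruct (lt_dec (l + j) m), (lt_dec l (m - j)); try lia;
      [rewrite plus_INR|]; ring.
Qed.

(* [cos_sum m w] and [sin_sum m w] use the frequencies [0 .. m-1]: a trigonometric
   polynomial of degree [n] corresponds to [m = S n]. *)
Definition cos_sum (m : nat) (w : nat -> R) (x : R) : R := rsum m (fun l => w l * cos (INR l * x)).
Definition sin_sum (m : nat) (w : nat -> R) (x : R) : R := rsum m (fun l => w l * sin (INR l * x)).

Lemma kernel_eq m x :
  kernel m x = cos_sum m (fun _ => 1) x * sin_sum m INR x - sin_sum m (fun _ => 1) x * cos_sum m INR x.
Proof.
  unfold kernel, cos_sum, sin_sum; rewrite !rsum_mul, <- rsum_sub; apply rsum_ext; intros l _.
  rewrite <- rsum_sub; apply rsum_ext; intros l' _.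
  replace ((INR l' - INR l) * x) with (INR l' * x - INR l * x) by ring.
  rewrite sin_minus; ring.
Qed.

Lemma cos_sum_sq_add_sin_sum_sq m w x :
  cos_sum m w x * cos_sum m w x + sin_sum m w x * sin_sum m w x =
  rsum m (fun l => rsum m (fun l' => w l * w l' * cos ((INR l - INR l') * x))).
Proof.
  unfold cos_sum, sin_sum; rewrite !rsum_mul, <- rsum_add; apply rsum_ext; intros l _.
  rewrite <- rsum_add; apply rsum_ext; intros l' _.
  replace ((INR l - INR l') * x) with (INR l * x - INR l' * x) by ring.
  rewrite cos_minus; ring.
Qed.

Lemma node_sum_cos_sum_sq M m w : (m <= M)%nat ->
  rsum M (fun i => cos_sum m w (node M i) * cos_sum m w (node M i)
                   + sin_sum m w (node M i) * sin_sum m w (node M i)) =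
  INR M * rsum m (fun l => w l * w l).
Proof.
  intros HM.
  rewrite (rsum_ext _ _ _ (fun i _ => cos_sum_sq_add_sin_sum_sq m w (node M i))).
  rewrite rsum_swap, <- rsum_scal_l; apply rsum_ext; intros l Hl.
  rewrite rsum_swap.
  rewrite (rsum_ext _ _ (fun l' => if Nat.eq_dec l' l then INR M * (w l * w l') else 0)).
  - rewrite (rsum_delta m l (fun l' => INR M * (w l * w l'))).
    destruct (lt_dec l m); [reflexivity | lia].
  - intros l' Hl'; rewrite rsum_scal_l.
    destruct (node_sum_diff M l l') as [-> _]; try lia.
    destruct (Nat.eq_dec l l'), (Nat.eq_dec l' l); subst; try lia; ring.
Qed.

Lemma two_mul_abs_le_amgm c a b : 0 < c -> 2 * Rabs a * Rabs b <= c * (a * a) + b * b / c.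
Proof.
  intros Hc.
  assert (0 <= (c * Rabs a - Rabs b) ^ 2) by apply pow2_ge_0.
  assert (Rabs a * Rabs a = a * a) by (rewrite <- Rabs_mult; apply Rabs_right; nra).
  assert (Rabs b * Rabs b = b * b) by (rewrite <- Rabs_mult; apply Rabs_right; nra).
  apply (Rmult_le_reg_l c); [exact Hc|]; field_simplify; nra.
Qed.

Lemma abs_kernel_le m x : (0 < m)%nat ->
  2 * Rabs (kernel m x) <=
  INR m * (cos_sum m (fun _ => 1) x * cos_sum m (fun _ => 1) x
           + sin_sum m (fun _ => 1) x * sin_sum m (fun _ => 1) x)
  + (cos_sum m INR x * cos_sum m INR x + sin_sum m INR x * sin_sum m INR x) / INR m.
Proof.
  intros Hm; assert (Hm' : 0 < INR m) by (apply lt_0_INR; exact Hm).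
  rewrite kernel_eq.
  assert (H1 := two_mul_abs_le_amgm _ (cos_sum m (fun _ => 1) x) (sin_sum m INR x) Hm').
  assert (H2 := two_mul_abs_le_amgm _ (sin_sum m (fun _ => 1) x) (cos_sum m INR x) Hm').
  assert (Htri := Rabs_triang (cos_sum m (fun _ => 1) x * sin_sum m INR x)
                              (- (sin_sum m (fun _ => 1) x * cos_sum m INR x))).
  rewrite Rabs_Ropp, !Rabs_mult in Htri.
  unfold Rminus, Rdiv in *; lra.
Qed.

Lemma node_sum_abs_kernel M m : (0 < m <= M)%nat ->
  rsum M (fun i => Rabs (kernel m (node M i))) <= INR M * (INR m * INR m).
Proof.
  intros Hm; assert (Hm' : 0 < INR m) by (apply lt_0_INR; lia).
  apply (Rmult_le_reg_l 2); [lra|].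
  rewrite <- rsum_scal_l.
  eapply Rle_trans; [apply rsum_le; intros i _; apply (abs_kernel_le m (node M i)); lia|].
  rewrite rsum_add, rsum_scal_l.
  unfold Rdiv; rewrite rsum_scal_r, !node_sum_cos_sum_sq by lia.
  assert (Hsq : rsum m (fun l => INR l * INR l) <= INR m * (INR m * INR m)).
  { rewrite <- rsum_const; apply rsum_le; intros l Hl.
    assert (INR l <= INR m) by (apply le_INR; lia).
    assert (0 <= INR l) by apply pos_INR; nra. }
  rewrite (rsum_ext _ (fun l => 1 * 1) (fun _ => 1)), rsum_const by (intros; ring).
  assert (0 < INR M) by (apply lt_0_INR; lia).
  apply (Rmult_le_reg_l (INR m)); [exact Hm'|]; field_simplify; [nra | lra].
Qed.

(* Since [kernel m] pairs with [sin (j x)] at the nodes to [M j (m - j) / 2], the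
   combination below pairs with [sin (j x)] to [- M j] for [j <= n],
   i.e. it differentiates sine polynomials of degree [n], while its l^1 norm on
   the nodes stays [O (n M)]. *)
Definition bernstein_kernel (n : nat) (x : R) : R := 2 / INR n * (kernel n x - kernel (2 * n) x).

Lemma node_sum_bernstein_kernel_mul n (phi : R -> R) :
  rsum (4 * n) (fun i => bernstein_kernel n (node (4 * n) i) * phi (node (4 * n) i)) =
  2 / INR n * (rsum (4 * n) (fun i => kernel n (node (4 * n) i) * phi (node (4 * n) i))
               - rsum (4 * n) (fun i => kernel (2 * n) (node (4 * n) i) * phi (node (4 * n) i))).
Proof.
  rewrite <- rsum_sub, <- rsum_scal_l; apply rsum_ext; intros; unfold bernstein_kernel; ring.
Qed.

Lemma node_sum_bernstein_kernel_sin n j : (1 <= n)%nat -> (j <= n)%nat ->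
  rsum (4 * n) (fun i => bernstein_kernel n (node (4 * n) i) * sin (INR j * node (4 * n) i)) =
  - (INR (4 * n) * INR j).
Proof.
  intros Hn Hj; assert (0 < INR n) by (apply lt_0_INR; lia).
  rewrite (node_sum_bernstein_kernel_mul n (fun x => sin (INR j * x))), !node_sum_kernel_sin by lia.
  rewrite !minus_INR, !mult_INR by lia; simpl (INR 2); simpl (INR 4); field; lra.
Qed.

Lemma node_sum_bernstein_kernel_cos n j : (j <= n)%nat ->
  rsum (4 * n) (fun i => bernstein_kernel n (node (4 * n) i) * cos (INR j * node (4 * n) i)) = 0.
Proof.
  intros Hj.
  rewrite (node_sum_bernstein_kernel_mul n (fun x => cos (INR j * x))), !node_sum_kernel_cos by lia.
  ring.
Qed.

Lemma node_sum_abs_bernstein_kernel n : (1 <= n)%nat ->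
  rsum (4 * n) (fun i => Rabs (bernstein_kernel n (node (4 * n) i))) <= 10 * INR n * INR (4 * n).
Proof.
  intros Hn; assert (Hn' : 0 < INR n) by (apply lt_0_INR; lia).
  assert (Hc : 0 < 2 / INR n) by (apply Rdiv_lt_0_compat; lra).
  eapply Rle_trans.
  { apply rsum_le; intros i _; unfold bernstein_kernel.
    rewrite Rabs_mult, (Rabs_right (2 / INR n)) by lra.
    apply Rmult_le_compat_l; [lra|]; unfold Rminus.
    eapply Rle_trans; [apply Rabs_triang | rewrite Rabs_Ropp; apply Rle_refl]. }
  rewrite rsum_scal_l, rsum_add.
  assert (K1 := node_sum_abs_kernel (4 * n) n ltac:(lia)).
  assert (K2 := node_sum_abs_kernel (4 * n) (2 * n) ltac:(lia)).
  assert (E4 : INR (4 * n) = 4 * INR n) by (rewrite mult_INR; simpl; ring).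
  assert (E2 : INR (2 * n) = 2 * INR n) by (rewrite mult_INR; simpl; ring).
  rewrite E4, E2 in *.
  replace (10 * INR n * (4 * INR n))
    with (2 / INR n * (4 * INR n * (INR n * INR n) + 4 * INR n * (2 * INR n * (2 * INR n))))
    by (field; lra).
  apply Rmult_le_compat_l; lra.
Qed.

Lemma bernstein_kernel_repr n b t : (1 <= n)%nat ->
  cos_sum (S n) (fun j => INR j * b j) t =
  / INR (4 * n) * rsum (4 * n) (fun i => bernstein_kernel n (node (4 * n) i)
                                          * sin_sum (S n) b (t - node (4 * n) i)).
Proof.
  intros Hn; assert (HM : 0 < INR (4 * n)) by (apply lt_0_INR; lia).
  unfold sin_sum, cos_sum.
  rewrite (rsum_ext (4 * n) _ (fun i => rsum (S n) (fun j =>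
      b j * sin (INR j * t) * (bernstein_kernel n (node (4 * n) i) * cos (INR j * node (4 * n) i))
    - b j * cos (INR j * t) * (bernstein_kernel n (node (4 * n) i) * sin (INR j * node (4 * n) i))))).
  - rewrite rsum_swap, <- rsum_scal_l; apply rsum_ext; intros j Hj.
    rewrite rsum_sub, !rsum_scal_l, node_sum_bernstein_kernel_sin, node_sum_bernstein_kernel_cos
      by lia.
    field; lra.
  - intros i _; rewrite <- rsum_scal_l; apply rsum_ext; intros j _.
    rewrite Rmult_minus_distr_l, sin_minus; ring.
Qed.

Theorem bernstein_inequality n b A : (1 <= n)%nat ->
  (forall x, Rabs (sin_sum (S n) b x) <= A) ->
  forall t, Rabs (cos_sum (S n) (fun j => INR j * b j) t) <= 10 * INR n * A.
Proof.
  intros Hn HA t; assert (HM : 0 < INR (4 * n)) by (apply lt_0_INR; lia).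
  assert (A0 : 0 <= A) by (eapply Rle_trans; [apply Rabs_pos | apply (HA 0)]).
  rewrite bernstein_kernel_repr, Rabs_mult, Rabs_right by (auto; left; apply Rinv_0_lt_compat; lra).
  apply (Rmult_le_reg_l (INR (4 * n))); [exact HM|]; rewrite <- Rmult_assoc, Rinv_r, Rmult_1_l by lra.
  eapply Rle_trans; [apply rsum_abs|].
  eapply Rle_trans.
  { apply rsum_le; intros i _; rewrite Rabs_mult.
    apply Rmult_le_compat_l; [apply Rabs_pos | apply HA]. }
  rewrite rsum_scal_r.
  assert (W := node_sum_abs_bernstein_kernel n Hn).
  apply Rmult_le_compat_r with (r := A) in W; [nra | exact A0].
Qed.

(** * A cosine polynomial cannot follow a kink *)

Lemma rsum_derive m (f : nat -> R -> R) (f' : nat -> R) x :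
  (forall j, derivable_pt_lim (f j) x (f' j)) ->
  derivable_pt_lim (fun y => rsum m (fun j => f j y)) x (rsum m f').
Proof.
  intros H; induction m as [|m IH]; simpl.
  - apply derivable_pt_lim_const.
  - apply (derivable_pt_lim_plus (fun y => rsum m (fun j => f j y)) (f m)); auto.
Qed.

Lemma cos_sum_derive m w x :
  derivable_pt_lim (cos_sum m w) x (sin_sum m (fun j => - (INR j * w j)) x).
Proof.
  apply (rsum_derive m (fun j y => w j * cos (INR j * y))); intros j.
  apply is_derive_Reals; auto_derive; [exact I | ring].
Qed.

Lemma sin_sum_derive m w x :
  derivable_pt_lim (sin_sum m w) x (cos_sum m (fun j => INR j * w j) x).
Proof.
  apply (rsum_derive m (fun j y => w j * sin (INR j * y))); intros j.
  apply is_derive_Reals; auto_derive; [exact I | ring].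
Qed.

Lemma abs_sin_sum_le m w x : Rabs (sin_sum m w x) <= rsum m (fun j => Rabs (w j)).
Proof.
  eapply Rle_trans; [apply rsum_abs | apply rsum_le; intros j _].
  rewrite Rabs_mult; assert (Rabs (sin (INR j * x)) <= 1) by (apply Rabs_le, SIN_bound).
  assert (0 <= Rabs (w j)) by apply Rabs_pos; nra.
Qed.

Lemma taylor2_bound (f f' f'' : R -> R) x t B : 0 < t ->
  (forall y, derivable_pt_lim f y (f' y)) -> (forall y, derivable_pt_lim f' y (f'' y)) ->
  (forall y, Rabs (f'' y) <= B) ->
  Rabs (f (x + t) - f x - t * f' x) <= B * t * t.
Proof.
  intros Ht Df Df' HB.
  destruct (MVT_cor2 (fun u => f u - u * f' x) (fun u => f' u - f' x) x (x + t))
    as [c [Ec Hc]].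
  { lra. }
  { intros c _; apply derivable_pt_lim_minus; [apply Df|].
    apply is_derive_Reals; auto_derive; [exact I | ring]. }
  destruct (MVT_cor2 f' f'' x c) as [c' [Ec' Hc']]; [lra | intros; apply Df'|].
  replace (f (x + t) - f x - t * f' x) with ((f' c - f' x) * (x + t - x)) by lra.
  rewrite Ec', !Rabs_mult, (Rabs_right (c - x)), (Rabs_right (x + t - x)) by lra.
  assert (H1 := HB c'); assert (0 <= Rabs (f'' c')) by apply Rabs_pos.
  assert (Rabs (f'' c') * (c - x) <= B * t) by nra; nra.
Qed.

Lemma abs_sup_exists (f : R -> R) B : (forall x, Rabs (f x) <= B) ->
  exists m, (forall x, Rabs (f x) <= m) /\ (forall B', (forall x, Rabs (f x) <= B') -> m <= B').
Proof.
  intros HB.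
  destruct (completeness (fun y => exists x, y = Rabs (f x))) as [m [Hub Hlub]].
  - exists B; intros y [x ->]; apply HB.
  - exists (Rabs (f 0)), 0; reflexivity.
  - exists m; split.
    + intros x; apply Hub; exists x; reflexivity.
    + intros B' HB'; apply Hlub; intros y [x ->]; apply HB'.
Qed.

Section KinkLowerBound.

Variables (n : nat) (r : nat -> R) (D : R -> R) (s eps : R).
Hypothesis n_pos : (1 <= n)%nat.
Hypothesis approx : forall x, Rabs (cos_sum (S n) r x - D x) <= eps.
Hypothesis D_lipschitz : forall x y, Rabs (D x - D y) <= 2 * s * Rabs (x - y).
Hypothesis D_kink : forall h, 0 <= h <= 1 -> s * h / 2 <= D h - D 0.

Let r' (j : nat) : R := - (INR j * r j).

Lemma approx_taylor x t B : 0 < t ->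
  (forall y, Rabs (cos_sum (S n) (fun j => INR j * r' j) y) <= B) ->
  Rabs (cos_sum (S n) r (x + t) - cos_sum (S n) r x - t * sin_sum (S n) r' x) <= B * t * t.
Proof.
  intros Ht; apply taylor2_bound; [exact Ht | apply cos_sum_derive | apply sin_sum_derive].
Qed.

Lemma approx_increment x t : 0 < t ->
  Rabs (cos_sum (S n) r (x + t) - cos_sum (S n) r x) <= 2 * s * t + 2 * eps.
Proof.
  intros Ht; assert (HL := D_lipschitz (x + t) x).
  replace (x + t - x) with t in HL by ring; rewrite (Rabs_right t) in HL by lra.
  assert (A1 := approx (x + t)); assert (A2 := approx x).
  apply Rabs_le_between in HL; apply Rabs_le_between in A1; apply Rabs_le_between in A2.
  apply Rabs_le; lra.
Qed.

Lemma approx_deriv_sup_le m1 :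
  (forall x, Rabs (sin_sum (S n) r' x) <= m1) ->
  (forall B, (forall x, Rabs (sin_sum (S n) r' x) <= B) -> m1 <= B) ->
  m1 <= 4 * s + 80 * INR n * eps.
Proof.
  intros Hm1 Hlub; assert (HN : 1 <= INR n) by (apply (le_INR 1); lia).
  assert (HB := bernstein_inequality n r' m1 n_pos Hm1).
  set (t := / (20 * INR n)); assert (Ht : 0 < t) by (apply Rinv_0_lt_compat; lra).
  enough (m1 <= 2 * s + 40 * INR n * eps + m1 / 2) by lra.
  apply Hlub; intros x.
  assert (T := approx_taylor x t _ Ht HB); assert (I := approx_increment x t Ht).
  apply (Rmult_le_reg_l t); [exact Ht|].
  replace (t * Rabs (sin_sum (S n) r' x)) with (Rabs (t * sin_sum (S n) r' x))
    by (rewrite Rabs_mult, (Rabs_right t); lra).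
  replace (t * (2 * s + 40 * INR n * eps + m1 / 2))
    with (2 * s * t + 2 * eps + 10 * INR n * m1 * t * t) by (unfold t; field; lra).
  apply Rabs_le_between in T; apply Rabs_le_between in I; apply Rabs_le; lra.
Qed.

Theorem kink_approx_lower_bound : s <= 1300 * INR n * eps.
Proof.
  assert (HN : 1 <= INR n) by (apply (le_INR 1); lia).
  destruct (abs_sup_exists (sin_sum (S n) r') _ (abs_sin_sum_le (S n) r')) as [m1 [Hm1 Hlub]].
  assert (Hm1b := approx_deriv_sup_le m1 Hm1 Hlub).
  assert (Hm1_0 : 0 <= m1) by (eapply Rle_trans; [apply Rabs_pos | apply (Hm1 0)]).
  assert (HB := bernstein_inequality n r' m1 n_pos Hm1).
  set (h := / (160 * INR n)).
  assert (Hh : 0 < h) by (apply Rinv_0_lt_compat; lra).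
  assert (Hh1 : h <= 1) by (unfold h; rewrite <- Rinv_1; apply Rinv_le_contravar; lra).
  assert (T := approx_taylor 0 h _ Hh HB).
  assert (Hflat : sin_sum (S n) r' 0 = 0).
  { unfold sin_sum; rewrite <- (rsum_zero (S n)) at 1; apply rsum_ext; intros.
    rewrite Rmult_0_r, sin_0; ring. }
  rewrite Hflat, Rplus_0_l in T.
  assert (A1 := approx h); assert (A0 := approx 0); assert (K := D_kink h (conj (Rlt_le _ _ Hh) Hh1)).
  assert (Hkink : s * h / 2 - 2 * eps <= 10 * INR n * (4 * s + 80 * INR n * eps) * h * h).
  { assert (10 * INR n * m1 * h * h <= 10 * INR n * (4 * s + 80 * INR n * eps) * h * h).
    { do 2 (apply Rmult_le_compat_r; [lra|]); apply Rmult_le_compat_l; lra. }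
    apply Rabs_le_between in T; apply Rabs_le_between in A1; apply Rabs_le_between in A0; lra. }
  unfold h in Hkink.
  apply (Rmult_le_compat_l (2560 * INR n)) in Hkink; [|lra].
  replace (2560 * INR n * (s * / (160 * INR n) / 2 - 2 * eps))
    with (8 * s - 5120 * INR n * eps) in Hkink by (field; lra).
  replace (2560 * INR n * (10 * INR n * (4 * s + 80 * INR n * eps) * / (160 * INR n)
                           * / (160 * INR n)))
    with (4 * s + 80 * INR n * eps) in Hkink by (field; lra).
  lra.
Qed.

End KinkLowerBound.

(** * Cosine polynomials under a change of variable *)

Inductive cos_span (n : nat) : (R -> R) -> Prop :=
  | cos_span_cos j c : (j <= n)%nat -> cos_span n (fun x => c * cos (INR j * x))
  | cos_span_add f g : cos_span n f -> cos_span n g -> cos_span n (fun x => f x + g x)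
  | cos_span_ext f g : cos_span n f -> (forall x, f x = g x) -> cos_span n g.

Lemma cos_span_mono n m f : (n <= m)%nat -> cos_span n f -> cos_span m f.
Proof.
  intros Hnm; induction 1.
  - apply cos_span_cos; lia.
  - apply cos_span_add; assumption.
  - eapply cos_span_ext; eassumption.
Qed.

Lemma cos_span_scal n c f : cos_span n f -> cos_span n (fun x => c * f x).
Proof.
  induction 1 as [j c' Hj | f g _ IHf _ IHg | f g _ IH Hfg].
  - apply (cos_span_ext _ _ _ (cos_span_cos n j (c * c') Hj)); intros; ring.
  - apply (cos_span_ext _ _ _ (cos_span_add n _ _ IHf IHg)); intros; ring.
  - apply (cos_span_ext _ _ _ IH); intros; rewrite Hfg; reflexivity.
Qed.

Lemma cos_span_mul_cos n f : cos_span n f -> cos_span (S n) (fun x => cos x * f x).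
Proof.
  induction 1 as [[|j] c Hj | f g _ IHf _ IHg | f g _ IH Hfg].
  - apply (cos_span_ext _ _ _ (cos_span_cos (S n) 1 c ltac:(lia))); intros x.
    simpl; rewrite Rmult_0_l, Rmult_1_l, cos_0; ring.
  - apply (cos_span_ext _ _ _ (cos_span_add _ _ _ (cos_span_cos (S n) (S (S j)) (c / 2) ltac:(lia))
                                                  (cos_span_cos (S n) j (c / 2) ltac:(lia)))).
    intros x; rewrite !S_INR.
    replace ((INR j + 1 + 1) * x) with ((INR j + 1) * x + x) by ring.
    replace (INR j * x) with ((INR j + 1) * x - x) by ring.
    rewrite cos_plus, cos_minus; field.
  - apply (cos_span_ext _ _ _ (cos_span_add _ _ _ IHf IHg)); intros; ring.
  - apply (cos_span_ext _ _ _ IH); intros; rewrite Hfg; reflexivity.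
Qed.

Lemma cos_span_cos_sum n f : cos_span n f -> exists r, forall x, f x = cos_sum (S n) r x.
Proof.
  induction 1 as [j c Hj | f g _ [r1 H1] _ [r2 H2] | f g _ [r H] Hfg].
  - exists (fun i => if Nat.eq_dec i j then c else 0); intros x; unfold cos_sum.
    rewrite (rsum_ext _ _ (fun i => if Nat.eq_dec i j then c * cos (INR i * x) else 0)).
    + rewrite (rsum_delta (S n) j (fun i => c * cos (INR i * x))).
      destruct (lt_dec j (S n)); [reflexivity | lia].
    + intros i _; destruct (Nat.eq_dec i j); ring.
  - exists (fun i => r1 i + r2 i); intros x; unfold cos_sum in *.
    rewrite H1, H2, <- rsum_add; apply rsum_ext; intros; ring.
  - exists r; intros x; rewrite <- Hfg; apply H.
Qed.

(* Chebyshev recursion: cos((j+2)X) = 2 cos X cos((j+1)X) - cos(jX). *)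
Lemma cos_span_chebyshev (X : R -> R) al be : (forall x, cos (X x) = al + be * cos x) ->
  forall j, cos_span j (fun x => cos (INR j * X x)).
Proof.
  intros HX.
  enough (H : forall j, cos_span j (fun x => cos (INR j * X x)) /\
                        cos_span (S j) (fun x => cos (INR (S j) * X x))) by apply H.
  induction j as [|j [IH1 IH2]].
  - split.
    + apply (cos_span_ext _ _ _ (cos_span_cos 0 0 1 ltac:(lia))); intros; simpl.
      rewrite !Rmult_0_l, cos_0; ring.
    + apply (cos_span_ext _ _ _ (cos_span_add _ _ _ (cos_span_cos 1 0 al ltac:(lia))
                                                    (cos_span_cos 1 1 be ltac:(lia)))).
      intros x; simpl; rewrite Rmult_0_l, cos_0, !Rmult_1_l, HX; ring.
  - split; [exact IH2|].
    assert (C1 := cos_span_scal _ (2 * al) _ (cos_span_mono (S j) (S (S j)) _ ltac:(lia) IH2)).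
    assert (C2 := cos_span_scal _ (2 * be) _ (cos_span_mul_cos _ _ IH2)).
    assert (C3 := cos_span_scal _ (-1) _ (cos_span_mono j (S (S j)) _ ltac:(lia) IH1)).
    apply (cos_span_ext _ _ _ (cos_span_add _ _ _ (cos_span_add _ _ _ C1 C2) C3)).
    intros x; rewrite !S_INR.
    replace ((INR j + 1 + 1) * X x) with ((INR j + 1) * X x + X x) by ring.
    replace (INR j * X x) with ((INR j + 1) * X x - X x) by ring.
    rewrite cos_plus, cos_minus, HX; ring.
Qed.

Lemma cos_sum_subst (X : R -> R) al be n a : (forall x, cos (X x) = al + be * cos x) ->
  exists r, forall x, cos_sum (S n) a (X x) = cos_sum (S n) r x.
Proof.
  intros HX; apply cos_span_cos_sum; unfold cos_sum.
  assert (H : forall m, (m <= S n)%nat ->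
            cos_span n (fun x => rsum m (fun j => a j * cos (INR j * X x)))).
  { induction m as [|m IH]; intros Hm; simpl.
    - apply (cos_span_ext _ _ _ (cos_span_cos n 0 0 ltac:(lia))); intros; ring.
    - apply cos_span_add; [apply IH; lia|].
      apply cos_span_scal, (cos_span_mono m); [lia|].
      apply (cos_span_chebyshev X al be HX). }
  apply H; lia.
Qed.

Lemma trig_sum_eq a b n x : trig_sum a b n x = cos_sum (S n) a x + sin_sum (S n) b x.
Proof.
  unfold cos_sum, sin_sum; induction n as [|n IH].
  - simpl; rewrite Rmult_0_l, cos_0, sin_0; ring.
  - cbn [trig_sum]; rewrite IH; cbn [rsum]; ring.
Qed.

Lemma even_part_approx u v n a k eps B :
  (forall y, -B <= y <= B -> Rabs (F1 y + (a * y + k) - trig_sum u v n y) <= eps) ->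
  forall y, -B <= y <= B -> Rabs (cos_sum (S n) u y - (Rabs y + k)) <= eps.
Proof.
  intros Happrox y Hy.
  assert (H1 := Happrox y Hy); assert (H2 := Happrox (- y) ltac:(lra)).
  unfold F1 in *; rewrite Rabs_Ropp in H2.
  assert (Heven : cos_sum (S n) u y = (trig_sum u v n y + trig_sum u v n (- y)) / 2).
  { rewrite !trig_sum_eq; unfold cos_sum, sin_sum.
    rewrite <- !rsum_add; unfold Rdiv; rewrite <- rsum_scal_r; apply rsum_ext; intros.
    rewrite Ropp_mult_distr_r_reverse, cos_neg, sin_neg; field. }
  rewrite Heven.
  apply Rabs_le_between in H1; apply Rabs_le_between in H2; apply Rabs_le; lra.
Qed.

Lemma sin_lipschitz x y : Rabs (sin x - sin y) <= Rabs (x - y).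
Proof.
  destruct (MVT_abs sin cos y x) as [c [Hc _]]; [intros; apply derivable_pt_lim_sin|].
  rewrite Hc; assert (Rabs (cos c) <= 1) by (apply Rabs_le, COS_bound).
  assert (0 <= Rabs (x - y)) by apply Rabs_pos; nra.
Qed.

Lemma abs_sub_le_sin_sub x y : -(PI / 3) <= x <= PI / 3 -> -(PI / 3) <= y <= PI / 3 ->
  Rabs (x - y) <= 2 * Rabs (sin x - sin y).
Proof.
  intros Hx Hy; assert (HPI := PI_RGT_0).
  destruct (MVT_abs sin cos y x) as [c [Hc [Hc1 Hc2]]]; [intros; apply derivable_pt_lim_sin|].
  assert (Hcr : -(PI / 3) <= c <= PI / 3).
  { split; [eapply Rle_trans; [|exact Hc1]; apply Rmin_glb; lra
           |eapply Rle_trans; [exact Hc2|]; apply Rmax_lub; lra]. }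
  assert (Hcos : 1 / 2 <= cos c).
  { rewrite <- cos_PI3; destruct (Rle_dec 0 c).
    - apply cos_decr_1; lra.
    - rewrite <- (cos_neg c); apply cos_decr_1; lra. }
  rewrite Hc, (Rabs_right (cos c)) by lra.
  assert (0 <= Rabs (x - y)) by apply Rabs_pos; nra.
Qed.

Lemma sin_ge_half_id w : 0 <= w <= PI / 3 -> w / 2 <= sin w.
Proof.
  intros Hw; assert (HPI := PI_RGT_0).
  assert (H := abs_sub_le_sin_sub w 0 ltac:(lra) ltac:(lra)).
  rewrite sin_0, !Rminus_0_r, Rabs_right, (Rabs_right (sin w)) in H by
    (try apply Rle_ge, sin_ge_0; lra).
  lra.
Qed.

Lemma asin_abs_le u c : 0 <= c <= PI / 2 -> Rabs u <= sin c -> Rabs (asin u) <= c.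
Proof.
  intros Hc Hu; apply Rabs_le_between in Hu.
  assert (Hs1 := SIN_bound c); assert (Ha := asin_bound u).
  assert (Hsa : sin (asin u) = u) by (apply sin_asin; lra).
  apply Rabs_le; split.
  - apply sin_incr_0; try lra; rewrite Hsa, sin_neg; lra.
  - apply sin_incr_0; try lra; rewrite Hsa; lra.
Qed.

Definition squeeze (s x : R) : R := 2 * asin (s * sin (x / 2)).

Lemma squeeze_0 s : squeeze s 0 = 0.
Proof.
  unfold squeeze; replace (0 / 2) with 0 by field.
  rewrite sin_0, Rmult_0_r, asin_0; ring.
Qed.

Section Squeeze.

Variable c : R.
Hypothesis c_range : 0 <= c <= PI / 3.

Lemma squeeze_arg_abs_le x : Rabs (sin c * sin (x / 2)) <= sin c.
Proof.
  assert (HPI := PI_RGT_0); assert (Hs : 0 <= sin c) by (apply sin_ge_0; lra).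
  rewrite Rabs_mult, (Rabs_right (sin c)) by lra.
  assert (Rabs (sin (x / 2)) <= 1) by apply Rabs_le, SIN_bound; nra.
Qed.

Lemma abs_asin_squeeze_arg_le x : Rabs (asin (sin c * sin (x / 2))) <= c.
Proof.
  assert (HPI := PI_RGT_0); apply asin_abs_le; [lra | apply squeeze_arg_abs_le].
Qed.

Lemma squeeze_arg_bound x : -1 <= sin c * sin (x / 2) <= 1.
Proof.
  assert (H := squeeze_arg_abs_le x); assert (Hs := SIN_bound c).
  apply Rabs_le_between in H; lra.
Qed.

Lemma abs_squeeze_le x : Rabs (squeeze (sin c) x) <= 2 * c.
Proof.
  unfold squeeze; rewrite Rabs_mult, Rabs_right by lra.
  assert (H := abs_asin_squeeze_arg_le x); lra.
Qed.

Lemma cos_squeeze x : cos (squeeze (sin c) x) = 1 - sin c * sin c + sin c * sin c * cos x.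
Proof.
  unfold squeeze; rewrite cos_2a_sin, sin_asin by apply squeeze_arg_bound.
  replace x with (2 * (x / 2)) at 3 by field; rewrite cos_2a_sin; ring.
Qed.

Lemma squeeze_lipschitz x y :
  Rabs (squeeze (sin c) x - squeeze (sin c) y) <= 2 * sin c * Rabs (x - y).
Proof.
  assert (HPI := PI_RGT_0); assert (Hs : 0 <= sin c) by (apply sin_ge_0; lra).
  assert (Hx := abs_asin_squeeze_arg_le x); assert (Hy := abs_asin_squeeze_arg_le y).
  apply Rabs_le_between in Hx; apply Rabs_le_between in Hy.
  assert (Hasin := abs_sub_le_sin_sub (asin (sin c * sin (x / 2))) (asin (sin c * sin (y / 2)))
                                      ltac:(lra) ltac:(lra)).
  rewrite !sin_asin in Hasin by apply squeeze_arg_bound.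
  rewrite <- Rmult_minus_distr_l, Rabs_mult, (Rabs_right (sin c)) in Hasin by lra.
  assert (Hsin := sin_lipschitz (x / 2) (y / 2)).
  replace (x / 2 - y / 2) with ((x - y) / 2) in Hsin by field.
  unfold Rdiv in Hsin; rewrite Rabs_mult, (Rabs_right (/ 2)) in Hsin by lra.
  unfold squeeze; rewrite <- Rmult_minus_distr_l, Rabs_mult, (Rabs_right 2) by lra.
  assert (sin c * Rabs (sin (x / 2) - sin (y / 2)) <= sin c * (Rabs (x - y) * / 2))
    by (apply Rmult_le_compat_l; lra).
  lra.
Qed.

Lemma squeeze_kink h : 0 <= h <= 1 -> sin c * h / 2 <= squeeze (sin c) h.
Proof.
  intros Hh; assert (HPI := PI_RGT_0); assert (HPI3 := PI2_3_2).
  assert (Hs : 0 <= sin c) by (apply sin_ge_0; lra).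
  set (u := sin c * sin (h / 2)).
  assert (Hu : sin c * (h / 2 / 2) <= u)
    by (apply Rmult_le_compat_l; [lra | apply sin_ge_half_id; lra]).
  assert (Hsa : sin (asin u) = u) by apply sin_asin, squeeze_arg_bound.
  assert (Ha := asin_bound u).
  assert (Hu0 : 0 <= u) by (assert (0 <= sin c * (h / 2 / 2)) by nra; lra).
  assert (Ha0 : 0 <= asin u) by (apply sin_incr_0; try lra; rewrite Hsa, sin_0; exact Hu0).
  assert (Hu_le : u <= asin u).
  { destruct (Req_dec (asin u) 0) as [E|E].
    - rewrite E, sin_0 in Hsa; lra.
    - assert (sin (asin u) < asin u) by (apply sin_lt_x; lra); lra. }
  unfold squeeze; fold u; nra.
Qed.

End Squeeze.

Lemma abs_approx_lower_bound b n T a k eps : 0 < b <= PI -> (1 <= n)%nat -> is_trig_poly n T ->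
  (forall x, -b <= x <= b -> Rabs (F1 x + (a * x + k) - T x) <= eps) ->
  b <= 10400 * INR n * eps.
Proof.
  intros Hb Hn [u [v HT]] Happrox; assert (HPI := PI_RGT_0).
  set (c := b / 4); assert (Hc : 0 <= c <= PI / 3) by (unfold c; lra).
  destruct (cos_sum_subst (squeeze (sin c)) _ _ n u (cos_squeeze c Hc)) as [r Hr].
  assert (Hs : sin c <= 1300 * INR n * eps).
  { apply (kink_approx_lower_bound n r (fun x => Rabs (squeeze (sin c) x) + k)); [exact Hn | | |].
    - intros x; rewrite <- Hr; apply (even_part_approx u v n a k eps b).
      + intros y Hy; rewrite <- HT; apply Happrox, Hy.
      + assert (H := abs_squeeze_le c Hc x); apply Rabs_le_between in H.
        assert (2 * c = b / 2) by (unfold c; field); lra.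
    - intros x y; replace (Rabs (squeeze (sin c) x) + k - (Rabs (squeeze (sin c) y) + k))
        with (Rabs (squeeze (sin c) x) - Rabs (squeeze (sin c) y)) by ring.
      eapply Rle_trans; [apply Rabs_triang_inv2 | apply squeeze_lipschitz, Hc].
    - intros h Hh; assert (H := squeeze_kink c Hc h Hh).
      assert (0 <= sin c) by (apply sin_ge_0; lra).
      rewrite squeeze_0, Rabs_R0, Rabs_right by nra; lra. }
  assert (Hsin := sin_ge_half_id c Hc); unfold c in *; lra.
Qed.

Theorem corollary3p5 :
  exists c1 : R, 0 < c1 /\
    forall (b : R), 0 < b <= PI ->
    forall (n : nat), (1 <= n)%nat ->
    forall (a k : R) (T : R -> R), is_trig_poly n T ->
      exists x : R, -b <= x <= b /\
        c1 * b / INR n <= Rabs (F1 x + (a * x + k) - T x).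
Proof.
  exists (/ 20000); split; [lra|].
  intros b Hb n Hn a k T HT; apply NNPP; intros Hnone.
  assert (HN : 0 < INR n) by (apply lt_0_INR; lia).
  assert (Hlow : b <= 10400 * INR n * (/ 20000 * b / INR n)).
  { apply (abs_approx_lower_bound b n T a k); [exact Hb | exact Hn | exact HT |].
    intros x Hx; destruct (Rle_lt_dec (/ 20000 * b / INR n) (Rabs (F1 x + (a * x + k) - T x)));
      [exfalso; apply Hnone; exists x; split; assumption | lra]. }
  replace (10400 * INR n * (/ 20000 * b / INR n)) with (10400 / 20000 * b) in Hlow
    by (field; lra).
  lra.
Qed.
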